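(* Consider a single-server FIFO system in a packet-switched network consisting of a work-conserving link of constant bit rate $c>0$ (bits per unit time), with infinite buffer and initially empty, fed by an input flow of packets of positive length. Let $A(t)$ and $A^{*}(t)$ be the cumulative input and output traffic (in bits) up to time $t$ (excluded), counted at the packet level as described in the context. Then $\beta(t)=ct$ is neither a strict service curve nor a service curve of this system; that is, there exist input flows for which the strict service curve inequality fails for $\beta(t)=ct$, and there exist input flows and times $t\ge 0$ with $A^{*}(t) < \inf_{0\le s\le t}\{A(s)+c(t-s)\}$.
   Context: Packets are indexed $n=1,2,\dots$, with arrival time $a(n)$, departure time $d(n)$ and length $l(n)>0$ bits. By convention, a packet is said to have arrived (respectively, been served) when and only when its last bit has arrived (respectively, departed). $A(t)$ denotes the cumulative amount of traffic (sum of lengths of packets) that has arrived in $[0,t)$, and $A^{*}(t)$ the cumulative amount of traffic that has been served (departed) in $[0,t)$; $A(0)=A^{*}(0)=0$, $A(s,t)=A(t)-A(s)$, $A^{*}(s,t)=A^{*}(t)-A^{*}(s)$. Let $\mathcal{F}_0$ be the set of nonnegative nondecreasing functions $f$ with $f(0)=0$. A function $\beta\in\mathcal{F}_0$ is a service curve of the system if for all $t\ge0$, $A^{*}(t)\ge \inf_{0\le s\le t}\{A(s)+\beta(t-s)\}$. A function $\beta\in\mathcal{F}_0$ is a strict service curve if during any backlogged period $(s,t]$ (a period during which there is always traffic that has arrived but not yet been served), $A^{*}(s,t)\ge\beta(t-s)$. The link is work-conserving: whenever the system is backlogged it transmits bits at rate $c$. *)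

From HB Require Import structures.
From mathcomp Require Import all_boot all_order all_algebra.
From mathcomp Require Import boolp classical_sets reals.
Set Implicit Arguments. Unset Strict Implicit. Unset Printing Implicit Defensive.
Import Order.TTheory GRing.Theory Num.Theory.
Local Open Scope ring_scope.
Local Open Scope classical_set_scope.

(* A (finite) input flow: N packets, indexed 0..N-1 (packet n+1 of the paper is
   index n here), with arrival times a i (time the last bit arrives) and lengths
   l i > 0 bits, arriving in FIFO order. *)
Definition valid_flow (R : realType) (N : nat) (a l : nat -> R) : Prop :=
  (forall i, (i < N)%N -> 0 <= a i /\ 0 < l i) /\
  (forall i j, (i <= j)%N -> (j < N)%N -> a i <= a j).

Fixpoint departure (R : realType) (c : R) (a l : nat -> R) (n : nat) : R :=
  match n with
  | O => a O + l O / c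
  | n'.+1 => Num.max (a n) (departure c a l n') + l n / c
  end.

Definition cumA (R : realType) (N : nat) (a l : nat -> R) (t : R) : R :=
  \sum_(i < N | a i < t) l i.

Definition cumAstar (R : realType) (c : R) (N : nat) (a l : nat -> R) (t : R) : R :=
  \sum_(i < N | departure c a l i < t) l i.

Definition backlogged (R : realType) (c : R) (N : nat) (a l : nat -> R) (u : R) : Prop :=
  cumAstar c N a l u < cumA N a l u.

Definition service_curve_for (R : realType) (c : R) (N : nat) (a l : nat -> R)
  (beta : R -> R) : Prop :=
  forall t, 0 <= t ->
    inf [set cumA N a l s + beta (t - s) | s in [set s | 0 <= s <= t]]
      <= cumAstar c N a l t.

Definition strict_service_curve_for (R : realType) (c : R) (N : nat) (a l : nat -> R)
  (beta : R -> R) : Prop :=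
  forall s t, 0 <= s -> s <= t ->
    (forall u, s < u -> u <= t -> backlogged c N a l u) ->
    beta (t - s) <= cumAstar c N a l t - cumAstar c N a l s.

From HB Require Import structures.
From mathcomp Require Import all_boot all_order all_algebra.
From mathcomp Require Import boolp classical_sets reals.
Import Order.TTheory GRing.Theory Num.Theory.
Local Open Scope ring_scope.
Local Open Scope classical_set_scope.

(** A single packet of length [L] arriving at time [0] is a counterexample to
both properties. The input counts all [L] bits as soon as [t > 0], but the
output counts them only once the last bit has left, at time [L / c]; so on
[(0, L / c]] the system is backlogged while [A*] stays [0], although [c t]
reaches [L] at [t = L / c]. For the service curve, [A(s) + c (L / c - s)] is
at least [L] for every [s] in [[0, L / c]], whereas [A*(L / c) = 0]. *)

Section SinglePacket.

Variables (R : realType) (c L : R).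
Hypotheses (c_gt0 : 0 < c) (L_gt0 : 0 < L).

Local Notation a := (fun=> 0 : R).
Local Notation l := (fun=> L).

Lemma valid_flow_single_packet : valid_flow 1 a l.
Proof. by split=> [i _ | i j _ _]; rewrite ?lexx. Qed.

Lemma departure_single_packet : departure c a l 0 = L / c.
Proof. by rewrite /= add0r. Qed.

Lemma cumA_single_packet t : cumA 1 a l t = if 0 < t then L else 0.
Proof. by rewrite /cumA big_mkcond big_ord1. Qed.

Lemma cumAstar_single_packet t :
  cumAstar c 1 a l t = if L / c < t then L else 0.
Proof. by rewrite /cumAstar big_mkcond big_ord1 departure_single_packet. Qed.

Lemma backlogged_single_packet u :
  0 < u -> u <= L / c -> backlogged c 1 a l u.
Proof.
move=> u_gt0 u_le.
by rewrite /backlogged cumA_single_packet cumAstar_single_packet u_gt0 (ltNge (L / c)) u_le.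
Qed.

Lemma rate_not_strict_service_curve_single_packet :
  ~ strict_service_curve_for c 1 a l (fun u => c * u).
Proof.
have Lc_gt0 : 0 < L / c by rewrite divr_gt0.
move=> /(_ 0 (L / c) (lexx 0) (ltW Lc_gt0) backlogged_single_packet).
rewrite !cumAstar_single_packet ltxx ltNge (ltW Lc_gt0) /= subr0 subrr.
by rewrite mulrCA divff ?gt_eqF // mulr1 leNgt L_gt0.
Qed.

Lemma cumAstar_lt_rate_service_bound_single_packet :
  cumAstar c 1 a l (L / c) <
    inf [set cumA 1 a l s + c * (L / c - s) | s in [set s | 0 <= s <= L / c]].
Proof.
have Lc_ge0 : 0 <= L / c by rewrite ltW ?divr_gt0.
rewrite cumAstar_single_packet ltxx; apply: (lt_le_trans L_gt0).
apply: lb_le_inf => [|_ [s /andP[s_ge0 s_le] <-]].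
  by exists (cumA 1 a l 0 + c * (L / c - 0)), 0 => //=; rewrite lexx Lc_ge0.
rewrite cumA_single_packet; case: ltP => [_ | s_le0].
  by rewrite lerDl mulr_ge0 ?subr_ge0 // ltW.
have -> : s = 0 by apply/eqP; rewrite eq_le s_le0 s_ge0.
by rewrite add0r subr0 mulrCA divff ?gt_eqF // mulr1.
Qed.

End SinglePacket.

Theorem proposition2 (R : realType) (c : R) (hc : 0 < c) :
  (exists (N : nat) (a l : nat -> R), valid_flow N a l /\
     ~ strict_service_curve_for c N a l (fun u => c * u)) /\
  (exists (N : nat) (a l : nat -> R), valid_flow N a l /\
     exists t : R, 0 <= t /\
       cumAstar c N a l t <
         inf [set cumA N a l s + c * (t - s) | s in [set s | 0 <= s <= t]]).
Proof.
split; exists 1%N, (fun=> 0), (fun=> 1); split; try exact: valid_flow_single_packet ltr01.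
  exact: rate_not_strict_service_curve_single_packet hc ltr01.
exists (1 / c); split; first by rewrite ltW ?divr_gt0.
exact: cumAstar_lt_rate_service_bound_single_packet hc ltr01.
Qed.
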